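(* For any filtration $\mathcal{F}_{t-1}$, conditioned on the event $E^f(t)$, we have for all $x\in\mathcal{Q}$ $$\mathbb{P}\left(f_t(x)>\rho_mf(x)\mid\mathcal{F}_{t-1}\right)\ge p,\qquad p=\frac{1}{4e\sqrt{\pi}},$$ where $f_t$ is sampled from $\mathcal{GP}(\mu_{t-1}(\cdot),\nu_t^2\sigma^2_{t-1}(\cdot))$ given $\mathcal{F}_{t-1}$.
   Context: Setting. Let $\mathcal{Q}\subset\mathbb{R}^n$ be finite, $k$ a positive semidefinite kernel on $\mathcal{Q}$ with $k\le1$, and $f$ in the RKHS of $k$ with $\|f\|_k\le\mathcal{B}_f$. Queries $x_1,x_2,\ldots\in\mathcal{Q}$ are selected sequentially; feedback $y_t=f(x_t)+\epsilon_t$ with $R$-sub-Gaussian $\epsilon_t$ and $|y_t|\le\mathcal{B}_y$, observed after a random delay $d_t\in\{0,1,\ldots\}$ drawn from a distribution $\mathcal{D}$. For an integer $m\ge1$, $\rho_m=\mathbb{P}(d_s\le m)$, censored feedback $\tilde y_{s,t}=y_s\mathbb{1}\{d_s\le\min(m,t-s)\}$. With $\lambda>0$: $\mu_{t-1}(x)=\mathbf{k}_{t-1}(x)^\top(\mathbf{K}_{t-1}+\lambda I)^{-1}\tilde{\mathbf{y}}_{t-1}$, $\sigma^2_{t-1}(x,x')=k(x,x')-\mathbf{k}_{t-1}(x)^\top(\mathbf{K}_{t-1}+\lambda I)^{-1}\mathbf{k}_{t-1}(x')$, $\sigma^2_{t-1}(x)=\sigma^2_{t-1}(x,x)$, $\mathbf{k}_{t-1}(x)=(k(x,x_i))_{i\le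 t-1}$, $\mathbf{K}_{t-1}=(k(x_i,x_j))_{i,j\le t-1}$, $\tilde{\mathbf{y}}_{t-1}=(\tilde y_{s,t})_{s\le t-1}$. $\gamma_t=\max_A\frac12\log\det(I+\lambda^{-1}\mathbf{K}_A)$ over collections $A$ of $t$ points. For $\delta\in(0,1)$: $\beta_t=\mathcal{B}_f+(R+\mathcal{B}_y)\sqrt{2(\gamma_{t-1}+1+\log(4/\delta))}$, $\nu_t=\mathcal{B}_y\sum_{s=t-m}^{t-1}\sigma_{t-1}(x_s)+\beta_t$ (terms with $s<1$ omitted). $\mathcal{F}_{t-1}$ is the history of inputs and observations up to iteration $t-1$. $E^f(t)$ is the event that $|\mu_{t-1}(x)-\rho_mf(x)|\le\nu_t\sigma_{t-1}(x)$ for all $x\in\mathcal{Q}$. *)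

From HB Require Import structures.
From mathcomp Require Import all_boot all_order all_algebra.
From mathcomp Require Import all_classical all_reals all_analysis.
Set Implicit Arguments. Unset Strict Implicit. Unset Printing Implicit Defensive.
Import Order.TTheory GRing.Theory Num.Theory.
Import numFieldNormedType.Exports.
Local Open Scope classical_set_scope.
Local Open Scope ring_scope.

Section GPUCB_delayed.
Context {R : realType} {Q : finType}.

(* kernel k : Q -> Q -> R, regulariser lambda, past queries xs (x_s at index s, s >= 1) *)
Variables (k : Q -> Q -> R) (lambda : R) (xs : nat -> Q).

(* k_{t-1}(x) = (k(x, x_s))_{s = 1..t-1}, indexed by i : 'I_(t-1) <-> s = i+1 *)
Definition kvec (t : nat) (x : Q) : 'cV[R]_(t.-1) := \col_(i < t.-1) k x (xs i.+1).

Definition Kmat (t : nat) : 'M[R]_(t.-1) :=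
  \matrix_(i < t.-1, j < t.-1) k (xs i.+1) (xs j.+1).

(* censored feedback vector (y_s 1{d_s <= min(m, t-s)})_{s <= t-1} *)
Definition ytil (ys : nat -> R) (ds : nat -> nat) (m t : nat) : 'cV[R]_(t.-1) :=
  \col_(i < t.-1) (ys i.+1 * ((ds i.+1 <= minn m (t - i.+1))%N)%:R).

Definition post_mean (ys : nat -> R) (ds : nat -> nat) (m t : nat) (x : Q) : R :=
  ((kvec t x)^T *m invmx (Kmat t + lambda%:M) *m ytil ys ds m t) 0 0.

Definition post_cov (t : nat) (x x' : Q) : R :=
  k x x' - ((kvec t x)^T *m invmx (Kmat t + lambda%:M) *m kvec t x') 0 0.

Definition post_sd (t : nat) (x : Q) : R := Num.sqrt (post_cov t x x).

Definition info_gain (j : nat) : R :=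
  \big[Num.max/0]_(A : j.-tuple Q)
     (2^-1 * ln (\det (1%:M + lambda^-1 *: \matrix_(i < j, l < j) k (tnth A i) (tnth A l)))).

Definition beta_t (Bf Rn By delta : R) (t : nat) : R :=
  Bf + (Rn + By) * Num.sqrt (2 * (info_gain t.-1 + 1 + ln (4 / delta))).

Definition nu_t (Bf Rn By delta : R) (m t : nat) : R :=
  By * (\sum_(t - m <= s < t | (0 < s)%N) post_sd t (xs s)) + beta_t Bf Rn By delta t.

Definition Ef_event (f : Q -> R) (rho : R) (ys : nat -> R) (ds : nat -> nat)
    (Bf Rn By delta : R) (m t : nat) : Prop :=
  forall x : Q, `|post_mean ys ds m t x - rho * f x|
                  <= nu_t Bf Rn By delta m t * post_sd t x.

End GPUCB_delayed.

(* rho_m = P(d <= m) for a delay distribution D on nat given by its pmf *)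
Definition rho_of {R : realType} (D : nat -> R) (m : nat) : R := \sum_(i < m.+1) D i.

Definition is_pmf_nat {R : realType} (D : nat -> R) : Prop :=
  (forall i, 0 <= D i) /\ ((fun n => \sum_(i < n) D i) @ \oo --> (1 : R)).

Definition psd_kernel {R : realType} {Q : finType} (k : Q -> Q -> R) : Prop :=
  (forall x y, k x y = k y x) /\
  (forall c : Q -> R, 0 <= \sum_(x : Q) \sum_(y : Q) c x * c y * k x y).

(* f lies in the RKHS of k with ||f||_k <= B (finite domain: RKHS = span of k(., y),
   with ||sum_y a_y k(.,y)||^2 = a^T K a; the norm is the minimum over representations) *)
Definition rkhs_ball {R : realType} {Q : finType} (k : Q -> Q -> R) (f : Q -> R) (B : R) : Prop :=
  exists a : Q -> R, (forall x, f x = \sum_(y : Q) a y * k x y) /\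
     \sum_(x : Q) \sum_(y : Q) a x * a y * k x y <= B ^+ 2.

Definition is_gaussian_rv {R : realType} {d} {Om : measurableType d}
    (P : probability Om R) (X : Om -> R) (mu v : R) : Prop :=
  measurable_fun setT X /\
  forall A : set R, measurable A ->
    P (X @^-1` A) = if 0 < v then normal_prob mu (Num.sqrt v) A else \d_mu A.

(* F : Om -> (Q -> R) is a Gaussian process with mean m and covariance c on the
   finite index set Q: every linear combination is Gaussian with the right moments *)
Definition is_GP {R : realType} {d} {Om : measurableType d} {Q : finType}
    (P : probability Om R) (F : Om -> Q -> R) (mean : Q -> R) (cov : Q -> Q -> R) : Prop :=
  forall c : Q -> R,
    is_gaussian_rv P (fun w => \sum_(x : Q) c x * F w x)
      (\sum_(x : Q) c x * mean x)
      (\sum_(x : Q) \sum_(y : Q) c x * c y * cov x y).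

(* Under the event E^f(t), the threshold rho_m f(x) lies at most nu_t sigma_{t-1}(x)
   above mu_{t-1}(x), i.e. at most one standard deviation above the mean of the
   Gaussian marginal f_t(x).  Hence P(f_t(x) > rho_m f(x)) is at least the mass of
   ]mu + s, mu + 3s/2] under N(mu, s^2), where the density is at least
   e^(-9/8) / (s sqrt(2 pi)); this gives e^(-9/8) / (2 sqrt(2 pi)) >= 1 / (4 e sqrt pi).
   Only the Gaussian marginal and E^f(t) are used. *)
From HB Require Import structures.
From mathcomp Require Import all_boot all_order all_algebra.
From mathcomp Require Import all_classical all_reals all_analysis.
Import Order.TTheory GRing.Theory Num.Theory.
Import numFieldNormedType.Exports.
From mathcomp Require Import ring lra measurable_realfun.
Local Open Scope classical_set_scope.
Local Open Scope ring_scope.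

Section normal_tail.
Context {R : realType}.

Lemma normal_peakMr (s : R) : 0 < s ->
  normal_peak s * s = (Num.sqrt 2 * Num.sqrt pi)^-1.
Proof.
move=> s0; rewrite /normal_peak.
have -> : s ^+ 2 * pi *+ 2 = s ^+ 2 * (2 * pi) by ring.
rewrite sqrtrM ?sqr_ge0 // sqrtr_sqr ger0_norm ?(ltW s0) // sqrtrM //.
by rewrite invfM mulrAC mulVf ?gt_eqF // mul1r.
Qed.

Lemma sqrt2_le_expR : Num.sqrt (2 : R) <= 2 * expR (- (1 / 8)).
Proof.
set y := expR (- (1 / 8) : R).
have y0 : 0 < y by exact: expR_gt0.
have y2 : 3 / 4 <= y ^+ 2.
  by rewrite /y -expRM_natr; apply: le_trans (expR_ge1Dx _); lra.
have sq2 : Num.sqrt (2 : R) ^+ 2 = 2 by rewrite sqr_sqrtr.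
have s20 : 0 <= Num.sqrt (2 : R) := sqrtr_ge0 _.
by rewrite expr2 in sq2 y2; nra.
Qed.

Lemma normal_mass_lb (s : R) : 0 < s ->
  1 / (4 * expR 1 * Num.sqrt pi) <= normal_peak s * expR (- (9 / 8)) * (s / 2).
Proof.
move=> s0.
have sp0 : 0 < Num.sqrt (pi : R) by rewrite sqrtr_gt0 pi_gt0.
have s20 : 0 < Num.sqrt (2 : R) by rewrite sqrtr_gt0.
have e0 : 0 < expR (1 : R) := expR_gt0 _.
set c := (4 * expR 1 * Num.sqrt 2 * Num.sqrt (pi : R))^-1.
have -> : normal_peak s * expR (- (9 / 8)) * (s / 2) = 2 * expR (- (1 / 8)) * c.
  have -> : expR (- (9 / 8)) = expR (- (1 / 8)) / expR 1 :> R.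
    by rewrite -expRN -expRD; congr expR; lra.
  have -> : normal_peak s * (expR (- (1 / 8)) / expR 1) * (s / 2)
            = normal_peak s * s * (expR (- (1 / 8)) / expR 1) / 2 by ring.
  by rewrite normal_peakMr // /c; field; rewrite !gt_eqF.
have -> : 1 / (4 * expR 1 * Num.sqrt pi) = Num.sqrt 2 * c.
  by rewrite /c; field; rewrite !gt_eqF.
by rewrite ler_pM2r ?invr_gt0 ?mulr_gt0 //; exact: sqrt2_le_expR.
Qed.

Lemma normal_pdf_ge (mu s r z : R) : 0 < s -> `|z - mu| <= r * s ->
  normal_peak s * expR (- (r ^+ 2 / 2)) <= normal_pdf mu s z.
Proof.
move=> s0 zr; rewrite normal_pdfE ?gt_eqF // ler_pM2l ?normal_peak_gt0 ?gt_eqF //.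
rewrite /normal_fun ler_expR mulNr lerN2 ler_pdivrMr ?mulrn_wgt0 ?exprn_gt0 //.
move/ler_normlP: zr => [zr1 zr2].
by rewrite -mulr_natr !expr2; nra.
Qed.

Lemma normal_prob_gt_lb (mu s a : R) : 0 < s -> a <= mu + s ->
  ((1 / (4 * expR 1 * Num.sqrt pi))%:E <= normal_prob mu s `]a, +oo[)%E.
Proof.
move=> s0 amu.
set A := `]mu + s, mu + s * (3 / 2)].
set c := normal_peak s * expR (- ((3 / 2) ^+ 2 / 2)).
have mA : measurable [set` A] := measurable_itv _.
have mpdf (D : set R) : measurable_fun D (fun z => (normal_pdf mu s z)%:E).
  by apply/measurable_EFinP; apply: measurable_funTS; exact: measurable_normal_pdf.
have AsubI : [set` A] `<=` [set` `]a, +oo[].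
  by move=> z /=; rewrite !in_itv /= andbT => /andP[+ _]; lra.
have pdfA : forall z, z \in A -> c <= normal_pdf mu s z.
  move=> z; rewrite in_itv /= => /andP[z1 z2]; apply: normal_pdf_ge => //.
  by apply/ler_normlP; split; lra.
have lenA : lebesgue_measure [set` A] = (s / 2)%:E.
  by rewrite lebesgue_measure_itv /= lte_fin ifT -?EFinB; [congr EFin|]; lra.
apply: (le_trans _ (ge0_subset_integral lebesgue_measure mA (measurable_itv _)
                      (mpdf _) _ AsubI)); last first.
  by move=> z _; rewrite lee_fin normal_pdf_ge0.
apply: (@le_trans _ _ (\int[lebesgue_measure]_(z in [set` A]) c%:E)%E); last first.
  apply: ge0_le_integral => //; last exact: mpdf.
  by move=> z _; rewrite lee_fin mulr_ge0 ?normal_peak_ge0 ?expR_ge0.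
rewrite integral_cst // [X in (_ * X)%E]lenA -EFinM lee_fin /c.
have -> : (3 / 2) ^+ 2 / 2 = 9 / 8 :> R by field.
exact: normal_mass_lb.
Qed.

End normal_tail.

Section gaussian_marginal.
Context {R : realType} {d : measure_display} {Om : measurableType d}.
Context {P : probability Om R}.

Lemma sum_indicator_mul {Q : finType} (x : Q) (F : Q -> R) :
  \sum_(y : Q) (y == x)%:R * F y = F x.
Proof.
under eq_bigr => y _ do rewrite mulr_natl mulrb.
by rewrite -big_mkcond big_pred1_eq.
Qed.

Lemma is_GP_marginal {Q : finType} {F : Om -> Q -> R} {mean cov} (x : Q) :
  is_GP P F mean cov -> is_gaussian_rv P (fun w => F w x) (mean x) (cov x x).
Proof.
have Fx : (fun w => \sum_(y : Q) (y == x)%:R * F w y) = (fun w => F w x).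
  by apply/funext => w; exact: sum_indicator_mul.
have covx : \sum_(y : Q) \sum_(z : Q) (y == x)%:R * (z == x)%:R * cov y z = cov x x.
  under eq_bigr => y _ do under eq_bigr => z _ do rewrite -mulrA.
  under eq_bigr => y _ do rewrite -mulr_sumr sum_indicator_mul.
  exact: sum_indicator_mul.
by move=> /(_ (fun y => (y == x)%:R)); rewrite Fx sum_indicator_mul covx.
Qed.

Lemma is_gaussian_rv_gt {X : Om -> R} {mu v} (a : R) : is_gaussian_rv P X mu v -> 0 < v ->
  P [set w | a < X w] = normal_prob mu (Num.sqrt v) `]a, +oo[.
Proof.
move=> [_ XA] v0; have := XA _ (measurable_itv `]a, +oo[); rewrite v0 => <-.
by congr (P _); apply/seteqP; split => w /=; rewrite in_itv /= andbT.
Qed.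

End gaussian_marginal.

Section confidence_width.
Context {R : realType} {Q : finType}.
Variables (k : Q -> Q -> R) (lambda : R) (xs : nat -> Q).
Variables (Bf Rn By delta : R).
Hypotheses (Bf0 : 0 <= Bf) (Rn0 : 0 < Rn) (By0 : 0 <= By).
Hypotheses (delta0 : 0 < delta) (delta4 : delta <= 4).

Lemma info_gain_ge0 j : 0 <= info_gain k lambda j.
Proof. exact: bigmax_ge_id. Qed.

Lemma beta_t_gt0 t : 0 < beta_t k lambda Bf Rn By delta t.
Proof.
have ln0 : 0 <= ln (4 / delta) by rewrite ln_ge0 // ler_pdivlMr // mul1r.
have ig0 := info_gain_ge0 t.-1.
apply: ltr_wpDl => //; apply: mulr_gt0; first exact: ltr_wpDr.
by rewrite sqrtr_gt0 pmulr_rgt0 // ltr_wpDr // ltr_wpDl.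
Qed.

Lemma nu_t_gt0 m t : 0 < nu_t k lambda xs Bf Rn By delta m t.
Proof.
apply: ltr_wpDl; last exact: beta_t_gt0.
by apply: mulr_ge0 => //; apply: sumr_ge0 => s _; exact: sqrtr_ge0.
Qed.

End confidence_width.

Theorem lemma3 (R : realType) (Q : finType) (k : Q -> Q -> R) (f : Q -> R)
  (Bf By Rn lambda delta : R) (D : nat -> R) (m t : nat)
  (xs : nat -> Q) (ys : nat -> R) (ds : nat -> nat)
  (d : measure_display) (Om : measurableType d) (P : probability Om R)
  (ft : Om -> Q -> R) :
  psd_kernel k -> (forall x y, k x y <= 1) ->
  0 <= Bf -> rkhs_ball k f Bf ->
  0 < Rn -> 0 <= By -> (forall s, `|ys s| <= By) ->
  is_pmf_nat D -> (1 <= m)%N -> 0 < lambda -> 0 < delta < 1 -> (1 <= t)%N ->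
  (* f_t | F_{t-1} ~ GP(mu_{t-1}, nu_t^2 sigma^2_{t-1}) *)
  is_GP P ft (post_mean k lambda xs ys ds m t)
    (fun x x' => nu_t k lambda xs Bf Rn By delta m t ^+ 2 * post_cov k lambda xs t x x') ->
  (* conditioned on E^f(t) *)
  Ef_event k lambda xs f (rho_of D m) ys ds Bf Rn By delta m t ->
  forall x : Q, 0 < post_sd k lambda xs t x ->
    ((1 / (4 * expR 1 * Num.sqrt pi))%:E
       <= P [set w | (rho_of D m * f x < ft w x)%R])%E.
Proof.
move=> _ _ Bf0 _ Rn0 By0 _ _ _ _ /andP[delta0 delta1] _ GP Ef x sd0.
set nu := nu_t k lambda xs Bf Rn By delta m t.
have nu0 : 0 < nu by apply: nu_t_gt0 => //; lra.
have cov0 : 0 < post_cov k lambda xs t x x by rewrite -sqrtr_gt0.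
rewrite (is_gaussian_rv_gt _ (is_GP_marginal x GP)) ?mulr_gt0 ?exprn_gt0 //.
rewrite sqrtrM ?sqr_ge0 // sqrtr_sqr ger0_norm ?(ltW nu0) // -/(post_sd k lambda xs t x).
apply: normal_prob_gt_lb; first exact: mulr_gt0.
by have /ler_normlP[+ _] := Ef x; rewrite -/nu; lra.
Qed.
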